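(* Let $\rho>1$. There exists $C=C(\rho)$ such that for all $\sigma_0,\sigma_1,\sigma_2\in\mathbb{R}$, \[ \int_{-\infty}^{\infty}\frac{dx}{\langle x^3+\sigma_2x^2+\sigma_1x+\sigma_0\rangle^{\rho}}\le C\langle3\sigma_1-\sigma_2^2\rangle^{-\frac14}. \]
   Context: $\langle x\rangle=1+|x|$. *)

From HB Require Import structures.
From mathcomp Require Import all_boot all_order all_algebra.
From mathcomp Require Import all_classical all_reals all_analysis.
Set Implicit Arguments. Unset Strict Implicit. Unset Printing Implicit Defensive.
Import Order.TTheory GRing.Theory Num.Theory.
Local Open Scope ring_scope.

Definition jbr {R : realType} (x : R) : R := 1 + `|x|.

(* After the shift u = x + s2/3 the cubic p becomes u^3 + (A/3) u + const with
   A = 3 s1 - s2^2, and p(x) - p(y) = (x - y) Q(u, v) with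
   Q(u, v) = u^2 + u v + v^2 + A/3.  On the sublevel set {|p| < H} every pair of
   points therefore satisfies |x - y| |Q| < 2H.  When A >= 0, |Q| dominates both
   (x - y)^2 and sqrt(A) |x - y|; when A = -9 k^2 < 0 the same holds for pairs
   in one of the four pieces cut out by u = -k, 0, k.  Either way
   |x - y| <= 3 H <A>^(-1/4) for H >= 1, so {|p| < H} has measure at most
   24 H <A>^(-1/4).  Bounding <p>^(-rho) by a weighted sum of the indicators of
   the dyadic sublevel sets {|p| < 2^n} then reduces the integral to a geometric
   series of ratio 2^(1 - rho) < 1. *)

From HB Require Import structures.
From mathcomp Require Import all_boot all_order all_algebra.
From mathcomp Require Import all_classical all_reals all_analysis.
From mathcomp Require Import ring lra measurable_realfun.
Import Order.TTheory GRing.Theory Num.Theory.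
Local Open Scope ring_scope.

Set Implicit Arguments.
Unset Strict Implicit.
Unset Printing Implicit Defensive.

Section real_lemmas.
Variable R : realType.

Lemma jbr_gt0 (x : R) : 0 < jbr x.
Proof. by rewrite /jbr ltr_pwDl. Qed.

Lemma powR_jbr_quarter (A : R) : (jbr A `^ (- 4^-1)) ^+ 4 = (jbr A)^-1.
Proof.
rewrite -powR_mulrn ?powR_ge0 // -powRrM mulNr mulVf ?pnatr_eq0 //.
by rewrite powRN powRr1 // ltW ?jbr_gt0.
Qed.

Lemma ltr_powR_self (a r : R) : 1 < a -> 1 < r -> a < a `^ r.
Proof.
move=> a1 r1; rewrite /powR gt_eqF; last lra.
rewrite -[X in X < _](@lnK _ a) ?posrE; last lra.
by rewrite ltr_expR ltr_pMl // ln_gt0.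
Qed.

Lemma dyadic_bracket (t : R) : 1 <= t -> exists n, 2 ^+ n <= t < 2 ^+ n.+1.
Proof.
move=> t1; have [|N ltN minN] := ex_minnP (_ : exists n, t < 2 ^+ n).
  exists (Num.truncn t).+1; apply: lt_le_trans (truncnS_gt t) _.
  by rewrite -natrX ler_nat ltnW // ltn_expl.
case: N ltN minN => [|n] ltN minN; first by move: ltN; rewrite expr0; lra.
exists n; rewrite ltN andbT leNgt; apply/negP => /minN; by rewrite ltnn.
Qed.

Lemma nneseries_geometric_le (M q : R) : 0 <= M -> 0 < q < 1 ->
  (\sum_(0 <= n <oo) (M * q ^+ n)%:E <= (M / (1 - q))%:E)%E.
Proof.
move=> M0 /andP[q0 q1].
apply: lime_le.
  by apply: is_cvg_nneseries => n _ _; rewrite lee_fin mulr_ge0 // exprn_ge0 // ltW.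
apply: nearW => n; rewrite sumEFin lee_fin.
have q_1 : `|q| < 1 by rewrite ger0_norm // ltW.
by have := geometric_le_lim n M0 q0 q_1; rewrite /series.
Qed.

End real_lemmas.

Section dyadic_layer_cake.
Local Open Scope classical_set_scope.
Variables (d : measure_display) (T : measurableType d) (R : realType).
Variable mu : {measure set T -> \bar R}.

Lemma measurable_norm_lt (f : T -> R) (H : R) :
  measurable_fun setT f -> measurable [set x | `|f x| < H].
Proof.
move=> mf; have := measurableT_comp (@normr_measurable R setT) mf.
move=> /(_ measurableT `]-oo, H[ (measurable_itv _)); rewrite setTI.
by congr measurable; apply/seteqP; split => x /=; rewrite in_itv.
Qed.

Lemma jbr_powRN_le_series (f : T -> R) (rho : R) (x : T) : 0 <= rho ->
  (((jbr (f x)) `^ rho)^-1%:E <=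
   \sum_(0 <= n <oo) (2 `^ rho * (2 `^ rho)^-1 ^+ n
                      * \1_[set y | `|f y| < 2 ^+ n] x)%:E)%E.
Proof.
move=> rho0; set beta := 2 `^ rho.
have beta0 : 0 < beta by exact: powR_gt0.
have coef0 n : 0 <= beta * beta^-1 ^+ n.
  by rewrite mulr_ge0 ?exprn_ge0 ?invr_ge0 ?ltW.
have term0 n : (0 <= (beta * beta^-1 ^+ n * \1_[set y | `|f y| < 2 ^+ n] x)%:E)%E.
  by rewrite lee_fin mulr_ge0 // indicE.
have t1 : 1 <= jbr (f x) by rewrite /jbr lerDl.
have [n /andP[lent ltn1]] := dyadic_bracket t1.
apply: le_trans; last exact: (nneseries_lim_ge n.+2).
rewrite big_nat_recr //=; apply: le_trans; last first.
  by apply: leeDr; apply: sume_ge0 => i _; exact: term0.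
rewrite indicE mem_set /=; last by move: ltn1; rewrite /jbr; lra.
rewrite mulr1 lee_fin exprSr mulrCA mulfV ?gt_eqF // mulr1.
rewrite exprVn -powR_mulrn ?powR_ge0 // -powRAC powR_mulrn //.
rewrite lef_pV2 ?posrE ?powR_gt0 ?exprn_gt0 //; last lra.
by rewrite ge0_ler_powR // nnegrE ?exprn_ge0 //; lra.
Qed.

Lemma integral_jbr_powRN_le (f : T -> R) (K rho : R) :
  measurable_fun setT f -> 1 < rho ->
  (forall H, 1 <= H -> (mu [set x | (`|f x| < H)%R] <= (K * H)%:E)%E) ->
  (\int[mu]_(x in [set: T]) ((jbr (f x)) `^ rho)^-1%:E
     <= (K * (2 `^ rho / (1 - 2 / 2 `^ rho)))%:E)%E.
Proof.
move=> mf rho1 sublevel.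
set beta := 2 `^ rho; set q := 2 / beta.
have beta2 : 2 < beta by apply: ltr_powR_self; lra.
have K0 : 0 <= K.
  by have := le_trans (measure_ge0 mu _) (sublevel 1 (lexx 1)); rewrite mulr1 lee_fin.
pose E n := [set x | `|f x| < (2 : R) ^+ n].
have mE n : measurable (E n) by exact: measurable_norm_lt.
have coef0 n : 0 <= beta * beta^-1 ^+ n.
  by rewrite mulr_ge0 ?exprn_ge0 ?invr_ge0 //; lra.
pose h n x := (beta * beta^-1 ^+ n * \1_(E n) x)%:E.
have h0 n x : (0 <= h n x)%E by rewrite lee_fin mulr_ge0 // indicE.
have mh n : measurable_fun setT (h n).
  by apply/measurable_EFinP; apply: measurable_funM => //; exact: measurable_indic.
have mg : measurable_fun setT (fun x => ((jbr (f x)) `^ rho)^-1%:E).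
  apply/measurable_EFinP; under eq_fun do rewrite -powRN.
  apply: measurableT_comp (measurable_powR _) _.
  by apply: measurable_funD => //; exact: measurableT_comp.
apply: (@le_trans _ _ (\int[mu]_(x in setT) \sum_(0 <= n <oo) h n x)%E).
  apply: ge0_le_integral => //.
  - by move=> x _; rewrite lee_fin invr_ge0 powR_ge0.
  - exact: ge0_emeasurable_sum.
  - by move=> x _; apply: jbr_powRN_le_series; lra.
rewrite integral_nneseries //.
have int_h n : (\int[mu]_(x in setT) h n x <= (K * beta * q ^+ n)%:E)%E.
  rewrite /h; under eq_integral do rewrite EFinM.
  rewrite ge0_integralZl_EFin //; last first.
    by apply/measurable_EFinP; exact: measurable_indic.
  rewrite integral_indic // setIT.
  apply: le_trans (lee_wpmul2l _ (sublevel _ (exprn_ege1 n _))) _.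
  - by rewrite lee_fin.
  - lra.
  have -> : K * beta * q ^+ n = beta * beta^-1 ^+ n * (K * 2 ^+ n).
    by rewrite /q exprMn; ring.
  by rewrite -EFinM.
apply: le_trans (lee_nneseries _ (fun n _ => int_h n)) _.
  by move=> n _ _; apply: integral_ge0 => x _.
rewrite mulrA; apply: nneseries_geometric_le; first by rewrite mulr_ge0 //; lra.
by rewrite divr_gt0 ?ltr_pdivrMr /=; lra.
Qed.

End dyadic_layer_cake.

Section lebesgue_measure_diam.
Local Open Scope classical_set_scope.
Variable R : realType.
Notation mu := (@lebesgue_measure R).

Lemma lebesgue_measure_le_diam (S : set R) (D : R) : measurable S -> 0 <= D ->
  (forall x y, S x -> S y -> `|x - y| <= D) -> (mu S <= (2 * D)%:E)%E.
Proof.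
move=> mS D0 diamS.
have [[x Sx]|/forallNP S0] := pselect (exists x, S x); last first.
  by rewrite (_ : S = set0) ?measure0 ?lee_fin ?mulr_ge0 //; apply/seteqP; split.
have Sitv : S `<=` `[x - D, x + D].
  move=> y Sy /=; rewrite in_itv /=.
  by have := diamS x y Sx Sy; rewrite ler_norml => /andP[? ?]; apply/andP; split; lra.
apply: (le_trans (le_measure mu (mem_set mS) (mem_set (measurable_itv _)) Sitv)).
rewrite /= lebesgue_measure_itv /= lte_fin; case: ifPn => _; last by rewrite lee_fin mulr_ge0.
by rewrite -EFinD lee_fin; lra.
Qed.

Lemma lebesgue_measure_split_le (E : set R) (c b1 b2 : R) : measurable E ->
  (mu (E `&` `]-oo, c]) <= b1%:E)%E -> (mu (E `&` `[c, +oo[) <= b2%:E)%E ->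
  (mu E <= (b1 + b2)%:E)%E.
Proof.
move=> mE le1 le2.
have cover : E `<=` (E `&` `]-oo, c]) `|` (E `&` `[c, +oo[).
  move=> x Ex; rewrite /= !in_itv /= andbT.
  by have [xc|xc] := leP x c; [left | right; split => //; lra].
apply: le_trans (le_measure mu (mem_set mE) _ cover) _.
  by rewrite inE; apply: measurableU; apply: measurableI => //; exact: measurable_itv.
rewrite EFinD; apply: le_trans (measureU2 _ _ _) (leeD le1 le2).
  all: by apply: measurableI => //; exact: measurable_itv.
Qed.

End lebesgue_measure_diam.

Section secant_slope.
Variable R : realFieldType.
Implicit Types A H k u v x y d Q : R.

Definition cubic (s0 s1 s2 x : R) := x ^+ 3 + s2 * x ^+ 2 + s1 * x + s0.

Definition secant_slope A u v := u ^+ 2 + u * v + v ^+ 2 + A / 3.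

Lemma cubicB s0 s1 s2 x y :
  cubic s0 s1 s2 x - cubic s0 s1 s2 y =
  (x - y) * secant_slope (3 * s1 - s2 ^+ 2) (x + s2 / 3) (y + s2 / 3).
Proof. by rewrite /cubic /secant_slope; field. Qed.

Definition slope_dominates A Q d :=
  d ^+ 2 <= 4 * `|Q| /\ `|A| * d ^+ 2 <= 9 * `|Q| ^+ 2.

Lemma slope_dominates_ge0 A u v :
  0 <= A -> slope_dominates A (secant_slope A u v) (u - v).
Proof.
rewrite /slope_dominates /secant_slope => A0.
set Q := _ + A / 3; set D := (u - v) ^+ 2.
have D0 : 0 <= D by exact: sqr_ge0.
have Q_ge : D / 4 + A / 3 <= Q by have := sqr_ge0 (u + v); rewrite /Q /D; lra.
have amgm : A * D <= 3 * (D / 4 + A / 3) ^+ 2.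
  by have := sqr_ge0 (D / 4 - A / 3); lra.
rewrite !ger0_norm //; last by lra.
split; nra.
Qed.

Lemma secant_slope_piece_ge k u v : 0 <= k -> 0 <= u -> 0 <= v ->
  (k <= u /\ k <= v) \/ (u <= k /\ v <= k) ->
  (u - v) ^+ 2 <= `|secant_slope (- (9 * k ^+ 2)) u v|
  /\ k * `|u - v| <= `|secant_slope (- (9 * k ^+ 2)) u v|.
Proof.
move=> k0 u0 v0 piece.
wlog vu : u v u0 v0 piece / v <= u => [hw|].
  have [|uv] := leP v u; first exact: hw.
  have piece' : (k <= v /\ k <= u) \/ (v <= k /\ u <= k).
    by case: piece => -[]; [left | right].
  have := hw v u v0 u0 piece' (ltW uv).
  rewrite /secant_slope distrC -sqrrN opprB.
  by have -> : v ^+ 2 + v * u + u ^+ 2 = u ^+ 2 + u * v + v ^+ 2 by ring.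
have -> : `|u - v| = u - v by rewrite ger0_norm // subr_ge0.
have kd0 : 0 <= k * (u - v) by apply: mulr_ge0; lra.
rewrite /secant_slope.
case: piece => [[ku kv]|[uk vk]].
  rewrite ger0_norm; first by split; nra.
  nra.
have kd : k * (u - v) <= 3 * k ^+ 2 - (u ^+ 2 + u * v + v ^+ 2).
  have : 0 <= (k - u) * (2 * k + u + v) by apply: mulr_ge0; lra.
  have : 0 <= (k - v) * (k + v) by apply: mulr_ge0; lra.
  lra.
rewrite ler0_norm; last by lra.
split; last by lra.
have : 0 <= (k - (u - v)) * (u - v) by apply: mulr_ge0; lra.
lra.
Qed.

Lemma secant_slopeN A u v : secant_slope A (- u) (- v) = secant_slope A u v.
Proof. by rewrite /secant_slope; ring. Qed.

Lemma slope_dominates_piece k u v : 0 <= k ->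
  [\/ k <= u /\ k <= v, [/\ 0 <= u, 0 <= v, u <= k & v <= k],
       [/\ u <= 0, v <= 0, - k <= u & - k <= v] | u <= - k /\ v <= - k] ->
  slope_dominates (- (9 * k ^+ 2)) (secant_slope (- (9 * k ^+ 2)) u v) (u - v).
Proof.
move=> k0 piece; set Q := secant_slope _ u v.
have [d2 kd] : (u - v) ^+ 2 <= `|Q| /\ k * `|u - v| <= `|Q|.
  have opp : (- u) - (- v) = - (u - v) by ring.
  have := @secant_slope_piece_ge k (- u) (- v) k0.
  rewrite secant_slopeN opp sqrrN normrN.
  case: piece => [[ku kv]|[u0 v0 uk vk]|[u0 v0 uk vk]|[uk vk]] negated.
  - by apply: secant_slope_piece_ge => //; [lra | lra | left].
  - by apply: secant_slope_piece_ge => //; right.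
  - by apply: negated; [lra | lra | right; lra].
  - by apply: negated; [lra | lra | left; lra].
have Q0 := normr_ge0 Q.
split; first lra.
have : (k * `|u - v|) ^+ 2 <= `|Q| ^+ 2.
  by rewrite lerXn2r // nnegrE // mulr_ge0.
rewrite normrN normrM normr_nat (ger0_norm (sqr_ge0 k)) exprMn real_normK ?num_real //.
lra.
Qed.

End secant_slope.

Section cubic_sublevel.
Local Open Scope classical_set_scope.
Variable R : realType.
Notation mu := (@lebesgue_measure R).

Lemma gap_le_of_slope_dominates (A H Q d : R) : 1 <= H ->
  `|d| * `|Q| < 2 * H -> slope_dominates A Q d ->
  `|d| <= 3 * H * jbr A `^ (- 4^-1).
Proof.
move=> H1 dQ [d2 Ad2].
have d0 := normr_ge0 d; have Q0 := normr_ge0 Q.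
have dQ0 : 0 <= `|d| * `|Q| := mulr_ge0 d0 Q0.
have sqd : `|d| ^+ 2 = d ^+ 2 by rewrite real_normK ?num_real.
have H2 : 1 <= H ^+ 2 by nra.
have d2H : `|d| <= 2 * H.
  rewrite -(ler_pXn2r (_ : (0 < 3)%N)) ?nnegrE //; last lra.
  have : `|d| ^+ 3 <= 4 * (`|d| * `|Q|) by rewrite exprS sqd; nra.
  nra.
have d4 : `|d| ^+ 4 <= 16 * H ^+ 4.
  by rewrite (_ : 16 * H ^+ 4 = (2 * H) ^+ 4) ?lerXn2r ?nnegrE //; [lra | ring].
have Ad4 : `|A| * `|d| ^+ 4 <= 36 * H ^+ 2.
  have -> : `|d| ^+ 4 = d ^+ 2 * d ^+ 2 by rewrite -sqd -exprD.
  have : (`|d| * `|Q|) ^+ 2 <= 4 * H ^+ 2 by nra.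
  rewrite exprMn sqd; nra.
rewrite -(ler_pXn2r (_ : (0 < 4)%N)) ?nnegrE ?mulr_ge0 ?powR_ge0 //; last lra.
rewrite exprMn powR_jbr_quarter ler_pdivlMr ?jbr_gt0 // /jbr.
have : H ^+ 2 <= H ^+ 4 by rewrite (_ : H ^+ 4 = H ^+ 2 * H ^+ 2); [nra | ring].
lra.
Qed.

Lemma measurable_cubic (s0 s1 s2 : R) : measurable_fun setT (cubic s0 s1 s2).
Proof.
by apply: measurable_funD => //; apply: measurable_funD => //;
  apply: measurable_funD => //; apply: measurable_funM => //; exact: measurable_funX.
Qed.

Lemma lebesgue_measure_cubic_sublevel (s0 s1 s2 H : R) : 1 <= H ->
  (mu [set x | (`|cubic s0 s1 s2 x| < H)%R]
     <= (24 * jbr (3 * s1 - s2 ^+ 2) `^ (- 4^-1) * H)%:E)%E.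
Proof.
move=> H1.
set A := 3 * s1 - s2 ^+ 2; set w := jbr A `^ (- 4^-1); set c := s2 / 3.
set E := [set x | _].
have mE : measurable E by apply: measurable_norm_lt; exact: measurable_cubic.
have wH0 : 0 <= w * H by apply: mulr_ge0; [exact: powR_ge0 | lra].
have shift x y : (x + c) - (y + c) = x - y by ring.
have dominated_le S : measurable S -> S `<=` E ->
    (forall x y, S x -> S y ->
       slope_dominates A (secant_slope A (x + c) (y + c)) ((x + c) - (y + c))) ->
    (mu S <= (6 * w * H)%:E)%E.
  move=> mS SE dom; rewrite (_ : 6 * w * H = 2 * (3 * H * w)); last by ring.
  apply: lebesgue_measure_le_diam => // [|x y Sx Sy]; first lra.
  rewrite -shift; apply: gap_le_of_slope_dominates H1 _ (dom x y Sx Sy).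
  rewrite shift -normrM -[_ * _](cubicB s0); apply: le_lt_trans (ler_normB _ _) _.
  by have := SE x Sx; have := SE y Sy; rewrite /E /=; lra.
have [A0|A0] := leP 0 A.
  apply: le_trans (dominated_le E mE (@subset_refl _ E) _) _.
    by move=> x y _ _; exact: slope_dominates_ge0.
  by rewrite lee_fin; lra.
set k := Num.sqrt (- A / 9).
have k0 : 0 <= k := sqrtr_ge0 _.
have Ak : A = - (9 * k ^+ 2) by rewrite sqr_sqrtr; [field | lra].
have piece_le (I J : interval R) :
    (forall x y, x \in I -> x \in J -> y \in I -> y \in J ->
       [\/ k <= x + c /\ k <= y + c,
           [/\ 0 <= x + c, 0 <= y + c, x + c <= k & y + c <= k],
           [/\ x + c <= 0, y + c <= 0, - k <= x + c & - k <= y + c]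
         | x + c <= - k /\ y + c <= - k]) ->
    (mu (E `&` [set` I] `&` [set` J]) <= (6 * w * H)%:E)%E.
  move=> pieceIJ; apply: dominated_le.
    by apply: measurableI; [apply: measurableI|]; [exact: mE|exact: measurable_itv|exact: measurable_itv].
    by move=> x [[]].
  move=> x y [[_ xI] xJ] [[_ yI] yJ]; rewrite Ak.
  exact: slope_dominates_piece k0 (pieceIJ x y xI xJ yI yJ).
rewrite (_ : 24 * w * H = (6 * w * H + 6 * w * H) + (6 * w * H + 6 * w * H)).
  2: by ring.
apply: (lebesgue_measure_split_le (c := - c)) => //.
- apply: (lebesgue_measure_split_le (c := - k - c)); first exact: measurableI.
  + apply: piece_le => x y; rewrite !in_itv /= => *; apply: Or44; lra.
  + apply: piece_le => x y; rewrite !in_itv /= => *; apply: Or43; split; lra.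
- apply: (lebesgue_measure_split_le (c := k - c)); first exact: measurableI.
  + apply: piece_le => x y; rewrite !in_itv /= => *; apply: Or42; split; lra.
  + apply: piece_le => x y; rewrite !in_itv /= => *; apply: Or41; lra.
Qed.

End cubic_sublevel.

Unset Implicit Arguments.

Theorem lemma4p4 (R : realType) (rho : R) (hrho : 1 < rho) :
  exists C : R, forall s0 s1 s2 : R,
    (\int[@lebesgue_measure R]_(x in [set: R])
        ((jbr (x ^+ 3 + s2 * x ^+ 2 + s1 * x + s0)) `^ rho)^-1 %:E
     <= (C * (jbr (3 * s1 - s2 ^+ 2)) `^ (- (4 : R)^-1))%:E)%E.
Proof.
exists (24 * (2 `^ rho / (1 - 2 / 2 `^ rho))) => s0 s1 s2.
rewrite mulrAC.
exact: (@integral_jbr_powRN_le _ _ _ (@lebesgue_measure R) _ _ _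
  (measurable_cubic s0 s1 s2) hrho (@lebesgue_measure_cubic_sublevel R s0 s1 s2)).
Qed.
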